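(* (Soundness.) Every branch that is refutable in the tableau calculus $\mathcal{T}$ described in the context is unsatisfiable.
   Context: Types: there is a countable set of base types, among them a distinguished base type $o$; the other base types are sorts ($\alpha$ ranges over sorts). Every base type is a type, and if $\sigma,\tau$ are types then $\sigma\tau$ is a type (functions from $\sigma$ to $\tau$; $\sigma\tau\mu=\sigma(\tau\mu)$). Countably many names, each with a unique type, infinitely many of each type. Terms: names; $st:\mu$ if $s:\tau\mu,t:\tau$; $\lambda x.t:\sigma\tau$ if $x:\sigma$ name, $t:\tau$. Logical constants: $\neg:oo$ and $=_\sigma:\sigma\sigma o$ for each type $\sigma$; other names are variables. Formulas are terms of type $o$; $s=_\sigma t$ is $(=_\sigma s)t$, $s\neq_\sigma t$ is $\neg(s=_\sigma t)$. Semantics: a frame $\mathcal{D}$ maps each type to a nonempty set with $\mathcal{D}(\sigma\tau)\subseteq(\mathcal{D}\sigma\to\mathcal{D}\tau)$. An assignment $\mathcal{I}$ into $\mathcal{D}$ extends $\mathcal{D}$ and maps each name $x:\sigma$ into $\mathcal{D}\sigma$; $\mathcal{I}^x_a$ is the update at $x$. Partial evaluation: $\hat{\mathcal{I}}x=\mathcal{I}x$; $\hat{\mathcal{I}}(st)=(\hat{\mathcal{I}}s)(\hat{\mathcal{I}}t)$ when both defined; $\hat{\mathcal{I}}(\lambda x.s)=f$ if $f\in\mathcal{D}(\sigma\tau)$ and $\widehat{\mathcal{I}^x_a}s=fa$ for all $a\in\mathcal{D}\sigma$. An interpretation is an assignment with total evaluation. Logical: $\mathcal{I}o=\{0,1\}$,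 $\mathcal{I}(\neg)$ negation, $\mathcal{I}(=_\sigma)$ identity. A model of a set $A$ of formulas is a logical interpretation with $\hat{\mathcal{I}}s=1$ for all $s\in A$; satisfiable = has a model. Normalization: fixed type-preserving total $[\cdot]$ on terms; $s$ normal iff $[s]=s$; (N1) $[[s]]=[s]$; (N2) $[[s]t]=[st]$; (N3) $[xs_1\dots s_n]=x[s_1]\dots[s_n]$ for a name $x$, $n\ge0$, $xs_1\dots s_n$ of base type; (N4) $\hat{\mathcal{I}}[s]=\hat{\mathcal{I}}s$ for every interpretation. Tableau calculus $\mathcal{T}$: a branch is a set of normal formulas. A rule instance $A/A_1\dots A_n$: $A$ a finite branch containing the premises, $A_i=A\cup$(formulas of the $i$-th alternative). Rules ($x$ a variable): (DN) $\neg\neg s$ / $s$. (BQ) $s=_ot$ / $\{s,t\}\mid\{\neg s,\neg t\}$. (BE) $s\neq_o t$ / $\{s,\neg t\}\mid\{\neg s,t\}$. (FQ) $s=_{\sigma\tau}t$ / $[su]=[tu]$, $u:\sigma$ normal. (FE) $s\neq_{\sigma\tau}t$ / $[sx]\neq[tx]$, $x:\sigma$ not free in $A$. (Mat) $xs_1\dots s_n,\neg xt_1\dots t_n$ / $s_1\neq t_1\mid\dots\mid s_n\neq t_n$ ($n\ge 0$). (Dec) $xs_1\dots s_n\neq_\alpha xt_1\dots t_n$ / $s_1\neq t_1\mid\dots\mid s_n\neq t_n$ ($n\ge0$). (Con) $s=_\alpha t,u\neq_\alpha v$ / $\{s\neq u,t\neq u\}\mid\{s\neq v,t\neq v\}$.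 $A$ is closed if $x,\neg x\in A$ for a variable $x:o$ or $x\neq_\alpha x\in A$ for a variable $x:\alpha$. Restrictions: (1) instances with $A$ closed are admitted only for Mat or Dec with $n=0$; (2) FE on $s\neq t\in A$ only if no variable $x$ has $[sx]\neq[tx]\in A$. Refutable branches: least set such that if $A/A_1\dots A_n$ is an admitted instance and all $A_i$ are refutable, then $A$ is refutable. *)

From mathcomp Require Import ssreflect ssrfun ssrbool eqtype choice.
From Stdlib Require Import List PeanoNat.
Import ListNotations.

Set Implicit Arguments.
Unset Strict Implicit.

Section STT.

(** The sorts: a countable set of base types other than [o].
    Base types are [TO] (= o) and [TS a] for [a : S]. *)
Variable S : countType.

Inductive ty : Type :=
| TO : ty
| TS : S -> ty
| Arr : ty -> ty -> ty.

Definition ty_eq_dec (s t : ty) : {s = t} + {s <> t}.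
Proof. decide equality. exact: eq_comparable. Defined.

(** Names: [Var T n] are the variables (infinitely many of each type),
    [NegC] is the constant [neg : oo], [EqC T] is [=_T : T T o]. *)
Inductive name : Type :=
| Var : ty -> nat -> name
| NegC : name
| EqC : ty -> name.

Definition nty (x : name) : ty :=
  match x with
  | Var T _ => T
  | NegC => Arr TO TO
  | EqC T => Arr T (Arr T TO)
  end.

Definition is_var (x : name) : Prop :=
  match x with Var _ _ => True | _ => False end.

Definition name_eq_dec (x y : name) : {x = y} + {x <> y}.
Proof. decide equality; try apply Nat.eq_dec; apply ty_eq_dec. Defined.

Inductive term : Type :=
| N : name -> term
| App : term -> term -> term
| Lam : name -> term -> term.

Inductive has_ty : term -> ty -> Prop :=
| ty_N x : has_ty (N x) (nty x)
| ty_App s t sg tau : has_ty s (Arr sg tau) -> has_ty t sg -> has_ty (App s t) tau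
| ty_Lam x s tau : has_ty s tau -> has_ty (Lam x s) (Arr (nty x) tau).

Definition is_base (T : ty) : Prop := T = TO \/ exists a, T = TS a.

Fixpoint free (y : name) (s : term) : Prop :=
  match s with
  | N x => x = y /\ is_var x
  | App s t => free y s \/ free y t
  | Lam x s => x <> y /\ free y s
  end.

Fixpoint apps (s : term) (l : list term) : term :=
  match l with [] => s | t :: l => apps (App s t) l end.

Fixpoint arrows (l : list ty) (T : ty) : ty :=
  match l with [] => T | s :: l => Arr s (arrows l T) end.

Definition neg (s : term) : term := App (N NegC) s.
Definition eqn (T : ty) (s t : term) : term := App (App (N (EqC T)) s) t.
Definition neq (T : ty) (s t : term) : term := neg (eqn T s t).

(** A frame: nonempty carriers, with [D (Arr s t)] a set of functions
    [D s -> D t] (represented via an extensional, hence injective,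
    application map). *)
Record frame : Type := {
  dom : ty -> Type;
  app : forall s t, dom (Arr s t) -> dom s -> dom t;
  app_ext : forall s t (f g : dom (Arr s t)), (forall a, app f a = app g a) -> f = g;
  dom_ne : forall t, inhabited (dom t)
}.

Definition valuation (F : frame) := forall x : name, dom F (nty x).

Definition upd (F : frame) (I : valuation F) (x : name) (a : dom F (nty x))
  : valuation F :=
  fun y => match name_eq_dec x y with
           | left e => eq_rect x (fun z => dom F (nty z)) a y e
           | right _ => I y
           end.

(** Partial evaluation [eval F I s T v] : "Î s is defined and equals v". *)
Inductive eval (F : frame) : valuation F -> term -> forall T, dom F T -> Prop :=
| ev_N I x : eval I (N x) (I x)
| ev_App I s t sg tau (f : dom F (Arr sg tau)) (a : dom F sg) :
    eval I s f -> eval I t a -> eval I (App s t) (app f a)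
| ev_Lam I x s tau (f : dom F (Arr (nty x) tau)) :
    (forall a : dom F (nty x), eval (upd I a) s (app f a)) ->
    eval I (Lam x s) f.

Definition interpretation (F : frame) (I : valuation F) : Prop :=
  forall s T, has_ty s T -> exists v : dom F T, eval I s v.

(** Logical: [D o] is {0,1} (via the bijection [tv], 1 = true),
    [neg] is negation and [=_T] is identity. *)
Definition logical (F : frame) (I : valuation F) (tv : dom F TO -> bool) : Prop :=
  bijective tv /\
  (forall a : dom F TO, tv (@app F TO TO (I NegC) a) = negb (tv a)) /\
  (forall T (a b : dom F T),
      tv (@app F T TO (@app F T (Arr T TO) (I (EqC T)) a) b) = true <-> a = b).

Definition satisfiable (A : term -> Prop) : Prop :=
  exists (F : frame) (I : valuation F) (tv : dom F TO -> bool),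
    interpretation I /\ logical I tv /\
    forall s, A s -> exists v : dom F TO, eval I s v /\ tv v = true.

Section Norm.
Variable nf : term -> term.

Definition nf_type_preserving : Prop :=
  forall s T, has_ty s T -> has_ty (nf s) T.
Definition N1 : Prop := forall s T, has_ty s T -> nf (nf s) = nf s.
Definition N2 : Prop :=
  forall s t T, has_ty (App s t) T -> nf (App (nf s) t) = nf (App s t).
Definition N3 : Prop :=
  forall x ss T, has_ty (apps (N x) ss) T -> is_base T ->
    nf (apps (N x) ss) = apps (N x) (map nf ss).
Definition N4 : Prop :=
  forall (F : frame) (I : valuation F), interpretation I ->
    forall s T (v : dom F T), has_ty s T -> (eval I (nf s) v <-> eval I s v).

Definition normal (s : term) : Prop := nf s = s.
Definition branch (A : term -> Prop) : Prop :=
  forall s, A s -> has_ty s TO /\ normal s.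
Definition finite (A : term -> Prop) : Prop :=
  exists l : list term, forall s, A s <-> In s l.

Inductive rule : Type :=
| RDN | RBQ | RBE | RFQ | RFE | RMat (n : nat) | RDec (n : nat) | RCon.

Definition lhs3 (p : ty * (term * term)) := p.2.1.
Definition rhs3 (p : ty * (term * term)) := p.2.2.
Definition alt3 (p : ty * (term * term)) : list term := [neq p.1 p.2.1 p.2.2].

(** [inst A r alts]: premises of rule [r] are in [A]; [alts] lists the
    formulas added in each alternative. Restriction (2) is built into FE. *)
Inductive inst (A : term -> Prop) : rule -> list (list term) -> Prop :=
| i_DN s : A (neg (neg s)) -> inst A RDN [[s]]
| i_BQ s t : A (eqn TO s t) -> inst A RBQ [[s; t]; [neg s; neg t]]
| i_BE s t : A (neq TO s t) -> inst A RBE [[s; neg t]; [neg s; t]]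
| i_FQ sg tau s t u :
    A (eqn (Arr sg tau) s t) -> has_ty u sg -> normal u ->
    inst A RFQ [[eqn tau (nf (App s u)) (nf (App t u))]]
| i_FE sg tau s t x :
    A (neq (Arr sg tau) s t) -> is_var x -> nty x = sg ->
    ~ (exists r, A r /\ free x r) ->
    ~ (exists y, is_var y /\ nty y = sg /\
                 A (neq tau (nf (App s (N y))) (nf (App t (N y))))) ->
    inst A RFE [[neq tau (nf (App s (N x))) (nf (App t (N x)))]]
| i_Mat x (l : list (ty * (term * term))) :
    is_var x -> nty x = arrows (map fst l) TO ->
    A (apps (N x) (map lhs3 l)) -> A (neg (apps (N x) (map rhs3 l))) ->
    inst A (RMat (length l)) (map alt3 l)
| i_Dec a x (l : list (ty * (term * term))) :
    is_var x -> nty x = arrows (map fst l) (TS a) ->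
    A (neq (TS a) (apps (N x) (map lhs3 l)) (apps (N x) (map rhs3 l))) ->
    inst A (RDec (length l)) (map alt3 l)
| i_Con a s t u v :
    A (eqn (TS a) s t) -> A (neq (TS a) u v) ->
    inst A RCon [[neq (TS a) s u; neq (TS a) t u];
                 [neq (TS a) s v; neq (TS a) t v]].

Definition closed (A : term -> Prop) : Prop :=
  (exists x, is_var x /\ nty x = TO /\ A (N x) /\ A (neg (N x))) \/
  (exists x a, is_var x /\ nty x = TS a /\ A (neq (TS a) (N x) (N x))).

(** Admitted rule instance: [A] a finite branch, restriction (1). *)
Definition admitted (A : term -> Prop) (r : rule) (alts : list (list term)) : Prop :=
  branch A /\ finite A /\ inst A r alts /\
  (closed A -> r = RMat 0 \/ r = RDec 0).

Inductive refutable : (term -> Prop) -> Prop :=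
| ref_intro A r alts :
    admitted A r alts ->
    (forall alt, In alt alts -> refutable (fun s => A s \/ In s alt)) ->
    refutable A.

End Norm.
End STT.

(** Every admitted rule instance preserves satisfiability: a model of the
    branch is a model of one of the alternatives, except for FE, where the
    fresh variable is first reinterpreted.  Mat and Dec are sound because
    evaluation is a congruence: if every argument pair denotes equal values, so
    do the two applications, contradicting the premise.  The normal forms
    introduced by FQ and FE denote the intended values by (N4), the only
    normalization axiom soundness needs. *)

From Pilot Require Import Defs.
From mathcomp Require Import ssreflect ssrfun ssrbool eqtype choice.
From Stdlib Require Import List Eqdep_dec Classical.
Import ListNotations.

Set Implicit Arguments.
Unset Strict Implicit.

Section Typing.
Variable S : countType.
Implicit Types (s t h : term S) (T U : ty S) (x : name S).

Lemma has_ty_uniq s T1 T2 : has_ty s T1 -> has_ty s T2 -> T1 = T2.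
Proof.
move=> H; elim: H T2 => [x|s' t sg tau _ IH1 _ _|x s' tau _ IH] T2 H2;
  inversion H2; subst => //.
- match goal with H : has_ty s' _ |- _ => by case: (IH1 _ H) end.
- match goal with H : has_ty s' _ |- _ => by rewrite (IH _ H) end.
Qed.

Lemma has_ty_N_inv x U : has_ty (N x) U -> U = nty x.
Proof. by move=> H; inversion H. Qed.

Lemma has_ty_App_inv s t U :
  has_ty (App s t) U -> exists sg, has_ty s (Arr sg U) /\ has_ty t sg.
Proof. by move=> H; inversion H; subst; eauto. Qed.

Lemma has_ty_neg_inv s U : has_ty (neg s) U -> has_ty s (TO S).
Proof. by case/has_ty_App_inv=> sg [/has_ty_N_inv [->]]. Qed.

Lemma has_ty_eqn_inv T s t U : has_ty (eqn T s t) U -> has_ty s T /\ has_ty t T.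
Proof.
case/has_ty_App_inv=> sg [/has_ty_App_inv [sg' [/has_ty_N_inv [-> ->] Hs]] Ht].
by [].
Qed.

Lemma has_ty_apps_head h ts U : has_ty (apps h ts) U -> exists U', has_ty h U'.
Proof.
elim: ts h => [|t ts IH] h /=; first by eauto.
by case/IH=> U' /has_ty_App_inv [sg [Hh _]]; eauto.
Qed.

Lemma has_ty_apps_args (g : ty S * (term S * term S) -> term S) l h U T0 :
  has_ty (apps h (map g l)) U -> has_ty h (arrows (map fst l) T0) ->
  forall p, In p l -> has_ty (g p) p.1.
Proof.
elim: l h => [|p l IH] h //= Happ Hh q Hq.
have [U' /has_ty_App_inv [sg [Hh' Hp]]] := has_ty_apps_head Happ.
have [Esg EU'] : sg = p.1 /\ U' = arrows (map fst l) T0.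
  by case: (has_ty_uniq Hh' Hh).
subst sg U'; case: Hq => [<-|Hq] //.
exact: IH (ty_App Hh' Hp) q Hq.
Qed.

End Typing.

Section Evaluation.
Variables (S : countType) (F : frame S).
Implicit Types (s t h : term S) (T U : ty S) (x y : name S) (I : valuation F).

Lemma existT_dom_inj T (a b : dom F T) :
  existT (dom F) T a = existT (dom F) T b -> a = b.
Proof. by apply: inj_pair2_eq_dec; apply: ty_eq_dec. Qed.

Lemma eval_N_inv I x T (v : dom F T) :
  eval I (N x) v -> existT (dom F) T v = existT (dom F) (nty x) (I x).
Proof. by move=> H; inversion H. Qed.

Lemma eval_App_inv I s t T (v : dom F T) :
  eval I (App s t) v -> exists sg (f : dom F (Arr sg T)) (a : dom F sg),
    [/\ eval I s f, eval I t a & v = Defs.app f a].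
Proof.
move=> H; inversion H; subst.
match goal with E : existT _ _ _ = existT _ _ _ |- _ =>
  have E' := existT_dom_inj E end.
by subst; exists sg, f, a.
Qed.

Lemma eval_Lam_inv I x s T (v : dom F T) :
  eval I (Lam x s) v -> exists tau (f : dom F (Arr (nty x) tau)),
    existT (dom F) T v = existT (dom F) _ f /\
    forall a, eval (upd I a) s (Defs.app f a).
Proof.
move=> H; inversion H; subst.
match goal with E : existT _ _ _ = existT _ _ _ |- _ =>
  have E' := existT_dom_inj E end.
by subst; do 2 eexists; split; [reflexivity | eassumption].
Qed.

Lemma existT_app_eq sg sg' tau tau' (f : dom F (Arr sg tau))
    (f' : dom F (Arr sg' tau')) a a' :
  existT (dom F) _ f = existT (dom F) _ f' -> existT (dom F) _ a = existT (dom F) _ a' ->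
  existT (dom F) _ (Defs.app f a) = existT (dom F) _ (Defs.app f' a').
Proof.
move=> Ef Ea; have [Esg Etau] : sg = sg' /\ tau = tau'.
  by case: (f_equal (@projT1 _ _) Ef).
by subst; rewrite (existT_dom_inj Ef) (existT_dom_inj Ea).
Qed.

(* Values are compared as dependent pairs: a priori a term could evaluate at
   two different types. *)
Lemma eval_functional I s T1 (v1 : dom F T1) T2 (v2 : dom F T2) :
  eval I s v1 -> eval I s v2 -> existT (dom F) T1 v1 = existT (dom F) T2 v2.
Proof.
move=> H; elim: H T2 v2 => {I s T1 v1}.
- by move=> I x T2 v2 /eval_N_inv.
- move=> I s t sg tau f a _ IHs _ IHt T2 v2 /eval_App_inv [sg' [f' [a' [Hs Ht ->]]]].
  exact: existT_app_eq (IHs _ _ Hs) (IHt _ _ Ht).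
- move=> I x s tau f _ IH T2 v2 /eval_Lam_inv [tau' [f' [-> Hf']]].
  have [a0] := dom_ne F (nty x).
  have Etau : tau = tau' := f_equal (@projT1 _ _) (IH a0 _ _ (Hf' a0)).
  subst tau'; congr existT; apply: app_ext => a.
  exact: existT_dom_inj (IH a _ _ (Hf' a)).
Qed.

Lemma upd_eq I x (a : dom F (nty x)) : upd I a x = a.
Proof.
rewrite /upd; case: (name_eq_dec x x) => [e|] //.
by rewrite (UIP_dec (@name_eq_dec S) e erefl).
Qed.

Lemma upd_neq I x (a : dom F (nty x)) y : x <> y -> upd I a y = I y.
Proof. by rewrite /upd; case: (name_eq_dec x y). Qed.

Lemma eval_eq_valuation I I' s T (v : dom F T) :
  (forall y, ~ is_var y \/ free y s -> I y = I' y) -> eval I s v -> eval I' s v.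
Proof.
move=> Hag H; elim: H I' Hag => {I s T v}.
- move=> I x I' Hag; rewrite Hag; first exact: ev_N.
  by case: x Hag => [U n| |U] _ /=; [right | left | left].
- move=> I s t sg tau f a _ IHs _ IHt I' Hag.
  by apply: ev_App; [apply: IHs | apply: IHt] => y Hy; apply: Hag; case: Hy => /=; tauto.
- move=> I x s tau f _ IH I' Hag; apply: ev_Lam => a; apply: IH => y Hy.
  rewrite /upd; case: (name_eq_dec x y) => [//|ne]; apply: Hag.
  by case: Hy => /=; tauto.
Qed.

Lemma eval_upd_not_free I x (a : dom F (nty x)) s T (v : dom F T) :
  is_var x -> ~ free x s -> eval I s v -> eval (upd I a) s v.
Proof.
move=> Hx Hfree; apply: eval_eq_valuation => y Hy.
by rewrite upd_neq // => Exy; subst y; case: Hy.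
Qed.

Lemma interpretation_upd I x (a : dom F (nty x)) :
  interpretation I -> interpretation (upd I a).
Proof.
move=> HI s T Hs.
have [f /eval_Lam_inv [tau [g [E Hg]]]] := HI _ _ (ty_Lam x Hs).
have [Etau] : Arr (nty x) T = Arr (nty x) tau by move: (f_equal (@projT1 _ _) E).
by subst tau; eauto.
Qed.

Lemma app_neq_witness sg tau (f g : dom F (Arr sg tau)) :
  f <> g -> exists a, Defs.app f a <> Defs.app g a.
Proof.
move=> Hfg; apply: NNPP => Hno; apply: Hfg; apply: app_ext => a.
by apply: NNPP => Ha; apply: Hno; exists a.
Qed.

Lemma eval_neg I s (b : dom F (TO S)) :
  eval I s b -> eval I (neg s) (Defs.app (I (NegC S)) b).
Proof. exact: ev_App (ev_N I (NegC S)). Qed.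

Lemma eval_eqn I T s t (a b : dom F T) : eval I s a -> eval I t b ->
  eval I (eqn T s t) (Defs.app (Defs.app (I (EqC T)) a) b).
Proof. by move=> Ha; apply: ev_App (ev_App (ev_N I (EqC T)) Ha). Qed.

Lemma eval_neg_inv I s (w : dom F (TO S)) : eval I (neg s) w ->
  exists b, eval I s b /\ w = Defs.app (I (NegC S)) b.
Proof.
case/eval_App_inv=> sg [f [a [/eval_N_inv E Ha ->]]].
have [Esg] : Arr sg (TO S) = Arr (TO S) (TO S) by move: (f_equal (@projT1 _ _) E).
by subst sg; rewrite (existT_dom_inj E); eauto.
Qed.

Lemma eval_eqn_inv I T s t (w : dom F (TO S)) : eval I (eqn T s t) w ->
  exists a b : dom F T,
    [/\ eval I s a, eval I t b & w = Defs.app (Defs.app (I (EqC T)) a) b].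
Proof.
case/eval_App_inv=> sg [f [b [/eval_App_inv [sg' [f' [a [/eval_N_inv E Ha ->]]]] Hb ->]]].
have [E1 E2] : Arr sg' (Arr sg (TO S)) = Arr T (Arr T (TO S)).
  by move: (f_equal (@projT1 _ _) E).
by subst sg sg'; rewrite (existT_dom_inj E); exists a, b.
Qed.

Definition sem_eq I s t := forall T1 T2 (v1 : dom F T1) (v2 : dom F T2),
  eval I s v1 -> eval I t v2 -> existT (dom F) T1 v1 = existT (dom F) T2 v2.

Lemma sem_eq_refl I s : sem_eq I s s.
Proof. by move=> T1 T2 v1 v2; apply: eval_functional. Qed.

Lemma sem_eq_App I s s' t t' :
  sem_eq I s s' -> sem_eq I t t' -> sem_eq I (App s t) (App s' t').
Proof.
move=> Hs Ht T1 T2 v1 v2 /eval_App_inv [sg [f [a [Hf Ha ->]]]].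
case/eval_App_inv=> sg' [f' [a' [Hf' Ha' ->]]].
exact: existT_app_eq (Hs _ _ _ _ Hf Hf') (Ht _ _ _ _ Ha Ha').
Qed.

Lemma sem_eq_apps I l h1 h2 : sem_eq I h1 h2 ->
  (forall p, In p l -> sem_eq I (lhs3 p) (rhs3 p)) ->
  sem_eq I (apps h1 (map (@lhs3 S) l)) (apps h2 (map (@rhs3 S) l)).
Proof.
elim: l h1 h2 => [|p l IH] h1 h2 Hh Hl //=.
apply: IH => [|q Hq]; last by apply: Hl; right.
by apply: sem_eq_App => //; apply: Hl; left.
Qed.

End Evaluation.

Section Truth.
Variables (S : countType) (F : frame S) (I : valuation F) (tv : dom F (TO S) -> bool).
Implicit Types (s t u v h : term S) (T : ty S).

Definition holds s := exists b : dom F (TO S), eval I s b /\ tv b = true.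

Definition model (A : term S -> Prop) :=
  [/\ interpretation I, logical I tv & forall s, A s -> holds s].

Hypotheses (HI : interpretation I) (HL : logical I tv).

Lemma tv_inj : injective tv.
Proof. by case: HL => /bij_inj. Qed.

Lemma holds_neg s : holds (neg s) <-> exists b, eval I s b /\ tv b = false.
Proof.
case: HL => _ [Hneg _]; split.
- by case=> w [/eval_neg_inv [b [Hb ->]]]; rewrite Hneg => /negbTE; eauto.
- case=> b [Hb Hf]; exists (Defs.app (I (NegC S)) b); split; first exact: eval_neg.
  by rewrite Hneg Hf.
Qed.

Lemma holds_eqn T s t :
  holds (eqn T s t) <-> exists a b : dom F T, [/\ eval I s a, eval I t b & a = b].
Proof.
case: HL => _ [_ Heq]; split.
- by case=> w [/eval_eqn_inv [a [b [Ha Hb ->]]] /Heq]; exists a, b.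
- case=> a [b [Ha Hb Eab]]; eexists; split; first exact: eval_eqn Ha Hb.
  exact/Heq.
Qed.

Lemma holds_neq T s t :
  holds (neq T s t) <-> exists a b : dom F T, [/\ eval I s a, eval I t b & a <> b].
Proof.
case: HL => _ [_ Heq]; rewrite holds_neg; split.
- case=> w [/eval_eqn_inv [a [b [Ha Hb ->]]] Hf]; exists a, b; split=> // Eab.
  by move: (proj2 (Heq _ a b) Eab); rewrite Hf.
- case=> a [b [Ha Hb Nab]]; eexists; split; first exact: eval_eqn Ha Hb.
  by apply: negbTE; apply/negP => /Heq.
Qed.

Lemma holds_neq_or_sem_eq T s t :
  has_ty s T -> has_ty t T -> holds (neq T s t) \/ sem_eq I s t.
Proof.
move=> Hs Ht; have [a Ha] := HI Hs; have [b Hb] := HI Ht.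
case: (classic (a = b)) => [Eab|Nab].
- subst b; right=> T1 T2 v1 v2 H1 H2.
  by rewrite -(eval_functional Ha H1) -(eval_functional Hb H2).
- by left; apply/holds_neq; exists a, b.
Qed.

Lemma holds_DN s : holds (neg (neg s)) -> holds s.
Proof.
case/holds_neg=> b [/eval_neg_inv [c [Hc ->]] Hf]; exists c; split=> //.
by case: HL => _ [Hneg _]; move: Hf; rewrite Hneg; case: (tv c).
Qed.

Lemma holds_BQ s t : holds (eqn (TO S) s t) ->
  Forall holds [s; t] \/ Forall holds [neg s; neg t].
Proof.
case/holds_eqn=> a [b [Ha Hb Eab]]; subst b.
case Ea: (tv a); [left | right]; repeat constructor;
  by [exists a | apply/holds_neg; exists a].
Qed.

Lemma holds_BE s t : holds (neq (TO S) s t) ->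
  Forall holds [s; neg t] \/ Forall holds [neg s; t].
Proof.
case/holds_neq=> a [b [Ha Hb Nab]].
have Eb : tv b = ~~ tv a by case: (tv a) (tv b) (@tv_inj a b) => [] [] // /(_ erefl).
case Ea: (tv a); [left | right]; rewrite Ea in Eb; repeat constructor;
  by [exists a | exists b | apply/holds_neg; exists a | apply/holds_neg; exists b].
Qed.

Lemma holds_Con T s t u v : holds (eqn T s t) -> holds (neq T u v) ->
  Forall holds [neq T s u; neq T t u] \/ Forall holds [neq T s v; neq T t v].
Proof.
case/holds_eqn=> c [c' [Hs Ht Ec]] /holds_neq [d [d' [Hu Hv Nd]]]; subst c'.
case: (classic (c = d)) => [Ecd|Ncd]; [right | left]; repeat constructor;
  apply/holds_neq; [exists c, d' | exists c, d' | exists c, d | exists c, d];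
  by split=> // Ecd'; apply: Nd; rewrite -?Ecd -?Ecd'.
Qed.

Lemma holds_args_neq (l : list (ty S * (term S * term S))) h
    T (a b : dom F T) :
  (forall p, In p l -> has_ty (lhs3 p) p.1) ->
  (forall p, In p l -> has_ty (rhs3 p) p.1) ->
  eval I (apps h (map (@lhs3 S) l)) a -> eval I (apps h (map (@rhs3 S) l)) b ->
  a <> b -> exists p, In p l /\ holds (neq p.1 (lhs3 p) (rhs3 p)).
Proof.
move=> Tl Tr Ha Hb Nab; apply: NNPP => Hno; apply: Nab.
have Hargs : forall p, In p l -> sem_eq I (lhs3 p) (rhs3 p).
  move=> p Hp; case: (holds_neq_or_sem_eq (Tl p Hp) (Tr p Hp)) => // Hneq.
  by case: Hno; exists p.
exact: existT_dom_inj (sem_eq_apps (sem_eq_refl (I:=I) (s:=h)) Hargs Ha Hb).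
Qed.

Lemma holds_Mat l h :
  (forall p, In p l -> has_ty (lhs3 p) p.1) ->
  (forall p, In p l -> has_ty (rhs3 p) p.1) ->
  holds (apps h (map (@lhs3 S) l)) -> holds (neg (apps h (map (@rhs3 S) l))) ->
  exists p, In p l /\ holds (neq p.1 (lhs3 p) (rhs3 p)).
Proof.
move=> Tl Tr [a [Ha Ta]] /holds_neg [b [Hb Tb]].
by apply: holds_args_neq Tl Tr Ha Hb _ => Eab; rewrite Eab Tb in Ta.
Qed.

Lemma holds_Dec l h T :
  (forall p, In p l -> has_ty (lhs3 p) p.1) ->
  (forall p, In p l -> has_ty (rhs3 p) p.1) ->
  holds (neq T (apps h (map (@lhs3 S) l)) (apps h (map (@rhs3 S) l))) ->
  exists p, In p l /\ holds (neq p.1 (lhs3 p) (rhs3 p)).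
Proof.
by move=> Tl Tr /holds_neq [a [b [Ha Hb Nab]]]; apply: holds_args_neq Tl Tr Ha Hb Nab.
Qed.

End Truth.

Section Soundness.
Variables (S : countType) (nf : term S -> term S).
Hypothesis HN4 : N4 nf.
Implicit Types (s t u : term S) (A : term S -> Prop).

Lemma holds_FQ (F : frame S) (I : valuation F) tv sg tau s t u :
  interpretation I -> logical I tv ->
  has_ty s (Arr sg tau) -> has_ty t (Arr sg tau) -> has_ty u sg ->
  holds I tv (eqn (Arr sg tau) s t) ->
  holds I tv (eqn tau (nf (App s u)) (nf (App t u))).
Proof.
move=> HI HL Hs Ht Hu /(holds_eqn HL) [f [g [Hf Hg Efg]]]; subst g.
have [c Hc] := HI _ _ Hu.
apply/(holds_eqn HL); exists (Defs.app f c), (Defs.app f c); split=> //.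
- by apply/(HN4 HI _ (ty_App Hs Hu)); apply: ev_App Hf Hc.
- by apply/(HN4 HI _ (ty_App Ht Hu)); apply: ev_App Hg Hc.
Qed.

Lemma model_upd_fresh (F : frame S) (I : valuation F) tv A x (a : dom F (nty x)) :
  is_var x -> ~ (exists r, A r /\ free x r) -> model I tv A -> model (upd I a) tv A.
Proof.
move=> Hx Hfresh [HI [Hbij [Hneg Heq]] HA].
have Hconst y : ~ is_var y -> upd I a y = I y.
  by move=> Hy; apply: upd_neq => Exy; subst y.
split; first exact: interpretation_upd.
  by split=> //; split=> [b|T b c]; rewrite Hconst.
move=> r Ar; have [v [Hv Tv]] := HA r Ar; exists v; split=> //.
by apply: eval_upd_not_free Hv => // Hfree; apply: Hfresh; exists r.
Qed.

(* FE: reinterpret the fresh variable [x] as a point where [s] and [t] differ. *)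
Lemma holds_FE (F : frame S) (I : valuation F) tv A tau s t x :
  model I tv A -> A (neq (Arr (nty x) tau) s t) ->
  has_ty s (Arr (nty x) tau) -> has_ty t (Arr (nty x) tau) ->
  is_var x -> ~ (exists r, A r /\ free x r) ->
  exists I' : valuation F,
    model I' tv A /\ holds I' tv (neq tau (nf (App s (N x))) (nf (App t (N x)))).
Proof.
move=> HM HA Hs Ht Hx Hfresh.
have [_ HL HAh] := HM.
have [f [g [Hf Hg Nfg]]] := proj1 (holds_neq HL _ _ _) (HAh _ HA).
have [c Nc] := app_neq_witness Nfg.
have HM' := model_upd_fresh c Hx Hfresh HM; have [HI' HL' _] := HM'.
have [Hfs Hft] : ~ free x s /\ ~ free x t.
  by split=> Hfree; apply: Hfresh; exists (neq (Arr (nty x) tau) s t); split=> //=; tauto.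
have Hf' := eval_upd_not_free c Hx Hfs Hf.
have Hg' := eval_upd_not_free c Hx Hft Hg.
have Hxc : eval (upd I c) (N x) c by move: (ev_N (upd I c) x); rewrite upd_eq.
exists (upd I c); split=> //; apply/(holds_neq HL').
exists (Defs.app f c), (Defs.app g c); split=> //.
- by apply/(HN4 HI' _ (ty_App Hs (ty_N x))); apply: ev_App Hf' Hxc.
- by apply/(HN4 HI' _ (ty_App Ht (ty_N x))); apply: ev_App Hg' Hxc.
Qed.

Lemma satisfiable_model (F : frame S) (I : valuation F) tv A alt :
  model I tv A -> Forall (holds I tv) alt -> satisfiable (fun s => A s \/ In s alt).
Proof.
move=> [HI HL HA] /Forall_forall Halt; exists F, I, tv; split=> //; split=> //.
by move=> s [/HA | /Halt].
Qed.

Lemma satisfiable_admitted A r alts : admitted nf A r alts -> satisfiable A ->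
  exists alt, In alt alts /\ satisfiable (fun s => A s \/ In s alt).
Proof.
move=> [Hbr [_ [Hinst _]]] [F [I [tv [HI [HL HA]]]]].
have HM : model I tv A by [].
have Hty s : A s -> has_ty s (TO S) by case/Hbr.
suff [alt [I' [Halt HM' Hholds]]] :
    exists alt (I' : valuation F), [/\ In alt alts, model I' tv A & Forall (holds I' tv) alt].
  by exists alt; split=> //; apply: satisfiable_model HM' Hholds.
case: Hinst => [s H | s t H | s t H | sg tau s t u H Hu _
               | sg tau s t x H Hx Hsg Hfresh _ | x l Hx HxT H1 H2 | a x l Hx HxT H
               | a s t u v H1 H2].
- by exists [s], I; split; [left | | repeat constructor; apply: holds_DN (HA _ H)].
- case: (holds_BQ HL (HA _ H)) => Hh; [exists [s; t] | exists [neg s; neg t]];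
    by exists I; split=> //=; auto.
- case: (holds_BE HL (HA _ H)) => Hh; [exists [s; neg t] | exists [neg s; t]];
    by exists I; split=> //=; auto.
- have [Hs Ht] := has_ty_eqn_inv (Hty _ H).
  exists [eqn tau (nf (App s u)) (nf (App t u))], I; split; [left | | ] => //.
  by repeat constructor; apply: holds_FQ Hs Ht Hu (HA _ H).
- subst sg; have [Hs Ht] := has_ty_eqn_inv (has_ty_neg_inv (Hty _ H)).
  have [I' [HM' Hh]] := holds_FE HM H Hs Ht Hx Hfresh.
  by exists [neq tau (nf (App s (N x))) (nf (App t (N x)))], I'; split; [left | | constructor].
- have Hx' : has_ty (N x) (arrows (map fst l) (TO S)) by rewrite -HxT; apply: ty_N.
  have [p [Hp Hh]] := holds_Mat HI HL (has_ty_apps_args (Hty _ H1) Hx')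
    (has_ty_apps_args (has_ty_neg_inv (Hty _ H2)) Hx') (HA _ H1) (HA _ H2).
  by exists (alt3 p), I; split; [apply: in_map | | constructor].
- have Hx' : has_ty (N x) (arrows (map fst l) (TS a)) by rewrite -HxT; apply: ty_N.
  have [Hl Hr] := has_ty_eqn_inv (has_ty_neg_inv (Hty _ H)).
  have [p [Hp Hh]] := holds_Dec HI HL (has_ty_apps_args Hl Hx') (has_ty_apps_args Hr Hx') (HA _ H).
  by exists (alt3 p), I; split; [apply: in_map | | constructor].
- case: (holds_Con HL (HA _ H1) (HA _ H2)) => Hh;
    [exists [neq (TS a) s u; neq (TS a) t u] | exists [neq (TS a) s v; neq (TS a) t v]];
    by exists I; split=> //=; auto.
Qed.

End Soundness.

Unset Implicit Arguments.

Theorem proposition5p1 (S : countType) (nf : term S -> term S)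
  (Htp : nf_type_preserving nf) (HN1 : N1 nf) (HN2 : N2 nf)
  (HN3 : N3 nf) (HN4 : N4 nf) (A : term S -> Prop) :
  refutable nf A -> ~ satisfiable A.
Proof.
elim=> {}A r alts Hadm _ IH Hsat.
have [alt [Halt Hsat']] := satisfiable_admitted HN4 Hadm Hsat.
exact: IH alt Halt Hsat'.
Qed.
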